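(* Let $(X,d)$ be a compact metric space, $f\colon X\to X$ a continuous map, and $S\subset X$ a compact subset with $f(S)\subset S$ and $CR(f|_S)=S$. If $f$ has the limit shadowing property around $S$, then $f$ has the shadowing property around $S$.
   Context: For $S\subset X$: $f$ has the shadowing property around $S$ if for every $\epsilon>0$ there is $\delta>0$ such that every $\delta$-pseudo orbit of $f$ (a sequence $(x_i)_{i\ge0}$ with $d(f(x_i),x_{i+1})\le\delta$ for all $i$) contained in $S$ is $\epsilon$-shadowed by some point $x\in X$ (i.e. $d(x_i,f^i(x))\le\epsilon$ for all $i$); $f$ has the limit shadowing property around $S$ if every limit pseudo orbit (sequence with $\lim_i d(f(x_i),x_{i+1})=0$) contained in $S$ admits $y\in X$ with $\lim_i d(x_i,f^i(y))=0$. $CR(g)$ denotes the set of chain recurrent points of $g$: $x$ such that for every $\delta>0$ there is a finite sequence $x=x_0,x_1,\dots,x_k=x$ ($k\ge1$) with $d(g(x_i),x_{i+1})\le\delta$ for $0\le i<k$. *)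

From Stdlib Require Import Reals.
Open Scope R_scope.

Record MetricSpace := {
  Mcar :> Type;
  dist : Mcar -> Mcar -> R;
  dist_nonneg : forall x y, 0 <= dist x y;
  dist_eq0 : forall x y, dist x y = 0 <-> x = y;
  dist_sym : forall x y, dist x y = dist y x;
  dist_tri : forall x y z, dist x z <= dist x y + dist y z
}.

Section Notions.
Variable X : MetricSpace.

Definition open_set (U : X -> Prop) : Prop :=
  forall x, U x -> exists r, 0 < r /\ forall y, dist X x y < r -> U y.

Definition compact_set (K : X -> Prop) : Prop :=
  forall (I : Type) (U : I -> X -> Prop),
    (forall i, open_set (U i)) ->
    (forall x, K x -> exists i, U i x) ->
    exists l : list I, forall x, K x -> exists i, List.In i l /\ U i x.

Definition compact_space : Prop := compact_set (fun _ => True).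

Definition continuous_map (f : X -> X) : Prop :=
  forall x eps, 0 < eps -> exists delta, 0 < delta /\
    forall y, dist X x y < delta -> dist X (f x) (f y) < eps.

Definition pseudo_orbit (f : X -> X) (delta : R) (xs : nat -> X) : Prop :=
  forall i, dist X (f (xs i)) (xs (S i)) <= delta.

Definition limit_pseudo_orbit (f : X -> X) (xs : nat -> X) : Prop :=
  Un_cv (fun i => dist X (f (xs i)) (xs (S i))) 0.

Definition contained_in (A : X -> Prop) (xs : nat -> X) : Prop :=
  forall i, A (xs i).

Definition shadowing_around (f : X -> X) (A : X -> Prop) : Prop :=
  forall eps, 0 < eps -> exists delta, 0 < delta /\
    forall xs, pseudo_orbit f delta xs -> contained_in A xs ->
      exists x : X, forall i, dist X (xs i) (Nat.iter i f x) <= eps.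

Definition limit_shadowing_around (f : X -> X) (A : X -> Prop) : Prop :=
  forall xs, limit_pseudo_orbit f xs -> contained_in A xs ->
    exists y : X, Un_cv (fun i => dist X (xs i) (Nat.iter i f y)) 0.

Definition chain_recurrent_restr (f : X -> X) (A : X -> Prop) (x : X) : Prop :=
  A x /\
  forall delta, 0 < delta -> exists (k : nat) (c : nat -> X),
    (1 <= k)%nat /\ c 0%nat = x /\ c k = x /\
    (forall i, (i <= k)%nat -> A (c i)) /\
    (forall i, (i < k)%nat -> dist X (f (c i)) (c (S i)) <= delta).

End Notions.

(* Suppose shadowing fails for some eps: for every delta there is a delta-pseudo orbit in S that no
   point eps-shadows, and by compactness already an initial segment x_0..x_N of it is not
   eps-shadowed.  Every point of S is chain recurrent, so with delta small the end x_(N+1) of the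
   segment can be joined back to x_0 by a fine chain.  Choosing such segments with meshes tending to
   0 whose starting points accumulate at some p in S, and joining consecutive segments through p,
   produces a single limit pseudo orbit in S that runs through each segment in turn.  A point
   asymptotically shadowing it would eventually eps-shadow a whole segment, a contradiction. *)

From Pilot Require Import Defs.
From Stdlib Require Import Reals Lra Lia Classical IndefiniteDescription List.
(* Re-import so that [dist] is the field of [MetricSpace] rather than [Rtopology.dist]. *)
Import Defs.
Open Scope R_scope.

Lemma functional_choice2 {T U V : Type} (P : T -> U -> V -> Prop) :
  (forall t, exists u v, P t u v) -> exists g h, forall t, P t (g t) (h t).
Proof.
  intros H.
  destruct (functional_choice (fun t uv => P t (fst uv) (snd uv))) as [gh Hgh].
  - intros t. destruct (H t) as [u [v Huv]]. exists (u, v). exact Huv.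
  - exists (fun t => fst (gh t)), (fun t => snd (gh t)). exact Hgh.
Qed.

Lemma list_min_pos {T : Type} (r : T -> R) (l : list T) :
  (forall t, In t l -> 0 < r t) -> exists m, 0 < m /\ forall t, In t l -> m <= r t.
Proof.
  induction l as [|a l IH]; intros H.
  - exists 1. split; [lra | intros t []].
  - destruct IH as [m [Hm Hl]]; [intros t Ht; apply H; right; exact Ht|].
    exists (Rmin (r a) m). split.
    + apply Rmin_glb_lt; [apply H; left; reflexivity | exact Hm].
    + intros t [<- | Ht]; [apply Rmin_l|].
      eapply Rle_trans; [apply Rmin_r | apply Hl; exact Ht].
Qed.

Lemma list_eventually {T : Type} (P : T -> nat -> Prop) (l : list T) :
  (forall t, In t l -> exists N, forall n, (N <= n)%nat -> P t n) ->
  exists N, forall t, In t l -> forall n, (N <= n)%nat -> P t n.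
Proof.
  induction l as [|a l IH]; intros H.
  - exists 0%nat. intros t [].
  - destruct IH as [N HN]; [intros t Ht; apply H; right; exact Ht|].
    destruct (H a (or_introl eq_refl)) as [Na HNa].
    exists (Nat.max N Na). intros t [<- | Ht] n Hn.
    + apply HNa. lia.
    + apply HN; [exact Ht | lia].
Qed.

Definition mesh (n : nat) : R := / (INR n + 1).

Lemma mesh_pos n : 0 < mesh n.
Proof. apply Rinv_0_lt_compat. pose proof (pos_INR n). lra. Qed.

Lemma mesh_anti n m : (n <= m)%nat -> mesh m <= mesh n.
Proof.
  intros Hnm. apply Rinv_le_contravar; [pose proof (pos_INR n); lra|].
  apply le_INR in Hnm. lra.
Qed.

Lemma mesh_cv0 : Un_cv mesh 0.
Proof.
  intros e He. destruct (archimed_cor1 e He) as [M [HM HM0]].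
  exists M. intros n Hn. unfold R_dist. rewrite Rminus_0_r, Rabs_pos_eq by apply Rlt_le, mesh_pos.
  eapply Rle_lt_trans; [apply mesh_anti, Hn|]. unfold mesh.
  apply lt_0_INR in HM0. eapply Rlt_trans; [|exact HM]. apply Rinv_lt_contravar; nra.
Qed.

Section Compactness.
Variable X : MetricSpace.

Lemma dist_refl (x : X) : dist X x x = 0.
Proof. apply dist_eq0. reflexivity. Qed.

Lemma compact_ball_subcover (K : X -> Prop) (Q : X -> R -> Prop) :
  compact_set X K -> (forall x, K x -> exists r, 0 < r /\ Q x r) ->
  exists l : list (X * R),
    (forall c, In c l -> 0 < snd c /\ Q (fst c) (snd c)) /\
    forall y, K y -> exists c, In c l /\ dist X (fst c) y < snd c.
Proof.
  intros HK HQ.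
  set (I := {c : X * R | 0 < snd c /\ Q (fst c) (snd c)}).
  destruct (HK I (fun c y => dist X (fst (proj1_sig c)) y < snd (proj1_sig c))) as [l Hl].
  - intros [[x r] Hxr] y Hy. simpl in *.
    exists (r - dist X x y). split; [lra|]. intros z Hz.
    pose proof (dist_tri X x y z). lra.
  - intros x Kx. destruct (HQ x Kx) as [r Hr].
    exists (exist _ (x, r) Hr). simpl. rewrite dist_refl. lra.
  - exists (map (@proj1_sig _ _) l). split.
    + intros c Hc. apply in_map_iff in Hc. destruct Hc as [[c' Hc'] [<- _]]. exact Hc'.
    + intros y Ky. destruct (Hl y Ky) as [c [Hc Hy]].
      exists (proj1_sig c). split; [apply in_map; exact Hc | exact Hy].
Qed.

Lemma compact_uniform_continuity (f : X -> X) :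
  compact_space X -> continuous_map X f ->
  forall e, 0 < e -> exists d, 0 < d /\
    forall u v, dist X u v < d -> dist X (f u) (f v) < e.
Proof.
  intros HX Hf e He.
  destruct (compact_ball_subcover (fun _ => True)
    (fun x r => forall y, dist X x y < 2 * r -> dist X (f x) (f y) < e / 2) HX)
    as [l [Hl Hcov]].
  { intros x _. destruct (Hf x (e / 2)) as [d [Hd Hx]]; [lra|].
    exists (d / 2). split; [lra|]. intros y Hy. apply Hx. lra. }
  destruct (list_min_pos snd l) as [m [Hm Hml]]; [intros c Hc; apply (Hl c Hc)|].
  exists m. split; [exact Hm|]. intros u v Huv.
  destruct (Hcov u I) as [[x r] [Hc Hu]]. simpl in Hu.
  destruct (Hl _ Hc) as [_ Hx]. pose proof (Hml _ Hc) as Hmr. simpl in Hx, Hmr.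
  pose proof (dist_tri X x u v).
  pose proof (Hx u ltac:(lra)). pose proof (Hx v ltac:(lra)).
  pose proof (dist_tri X (f u) (f x) (f v)). rewrite (dist_sym X (f u) (f x)) in *. lra.
Qed.

Lemma compact_cluster_point (K : X -> Prop) (u : nat -> X) :
  compact_set X K -> (forall n, K (u n)) ->
  exists p, K p /\
    forall r, 0 < r -> forall N, exists n, (N <= n)%nat /\ dist X p (u n) < r.
Proof.
  intros HK Hu. apply NNPP; intros Hno.
  destruct (compact_ball_subcover K
    (fun x r => exists N, forall n, (N <= n)%nat -> r <= dist X x (u n)) HK) as [l [Hl Hcov]].
  { intros x Kx. apply NNPP; intros H1. apply Hno. exists x. split; [exact Kx|].
    intros r Hr N. apply NNPP; intros H2. apply H1. exists r. split; [exact Hr|].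
    exists N. intros n Hn. apply Rnot_lt_le. intros H3. apply H2. exists n. split; assumption. }
  destruct (list_eventually (fun c n => snd c <= dist X (fst c) (u n)) l) as [N HN].
  { intros c Hc. apply (Hl c Hc). }
  destruct (Hcov (u N) (Hu N)) as [c [Hc Hlt]].
  pose proof (HN c Hc N (le_n N)). lra.
Qed.

Lemma continuous_iter (f : X -> X) (n : nat) :
  continuous_map X f -> continuous_map X (Nat.iter n f).
Proof.
  intros Hf. induction n as [|n IH]; intros x eps He.
  - exists eps. split; auto.
  - destruct (Hf (Nat.iter n f x) eps He) as [d1 [Hd1 H1]].
    destruct (IH x d1 Hd1) as [d2 [Hd2 H2]].
    exists d2. split; [exact Hd2|]. intros y Hy. apply H1, H2, Hy.
Qed.

(* Points eps-shadowing ever longer initial segments would accumulate at a point eps-shadowing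
   the whole sequence. *)
Lemma unshadowed_initial_segment (f : X -> X) (xs : nat -> X) (eps : R) :
  compact_space X -> continuous_map X f ->
  (forall x, exists i, eps < dist X (xs i) (Nat.iter i f x)) ->
  exists N, forall x, exists i, (i <= N)%nat /\ eps < dist X (xs i) (Nat.iter i f x).
Proof.
  intros HX Hf Hun. apply NNPP; intros Hno.
  assert (Hy : forall N, exists y, forall i, (i <= N)%nat -> dist X (xs i) (Nat.iter i f y) <= eps).
  { intros N. apply NNPP; intros H1. apply Hno. exists N. intros x. apply NNPP; intros H2.
    apply H1. exists x. intros i Hi. apply Rnot_lt_le. intros H3. apply H2. exists i. auto. }
  destruct (functional_choice _ Hy) as [y Hy'].
  destruct (compact_cluster_point (fun _ => True) y HX (fun _ => I)) as [p [_ Hp]].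
  destruct (Hun p) as [i Hi].
  set (gap := dist X (xs i) (Nat.iter i f p) - eps).
  destruct (continuous_iter f i Hf p (gap / 2)) as [d [Hd Hc]]; [unfold gap; lra|].
  destruct (Hp d Hd i) as [n [Hin Hpn]].
  pose proof (Hc _ Hpn). pose proof (Hy' n i Hin).
  pose proof (dist_tri X (xs i) (Nat.iter i f (y n)) (Nat.iter i f p)).
  rewrite (dist_sym X (Nat.iter i f (y n)) (Nat.iter i f p)) in *. unfold gap in *. lra.
Qed.

Definition shadowing_fails_at (f : X -> X) (A : X -> Prop) (eps : R) : Prop :=
  forall delta, 0 < delta -> exists xs, pseudo_orbit X f delta xs /\ contained_in X A xs /\
    forall x, exists i, eps < dist X (xs i) (Nat.iter i f x).

Lemma not_shadowing_around (f : X -> X) (A : X -> Prop) :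
  ~ shadowing_around X f A -> exists eps, 0 < eps /\ shadowing_fails_at f A eps.
Proof.
  intros Hns. apply NNPP; intros H1. apply Hns. intros eps He. apply NNPP; intros H2.
  apply H1. exists eps. split; [exact He|]. intros delta Hd. apply NNPP; intros H3.
  apply H2. exists delta. split; [exact Hd|]. intros xs Hpo HA. apply NNPP; intros H4.
  apply H3. exists xs. split; [exact Hpo|]. split; [exact HA|]. intros x. apply NNPP; intros H5.
  apply H4. exists x. intros i. apply Rnot_lt_le. intros H6. apply H5. exists i. exact H6.
Qed.

End Compactness.

Definition splice {T : Type} (k1 : nat) (c1 c2 : nat -> T) (i : nat) : T :=
  if Nat.leb i k1 then c1 i else c2 (i - k1)%nat.

Fixpoint block_index (k : nat -> nat) (j : nat) : nat * nat :=
  match j with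
  | 0 => (0%nat, 0%nat)
  | S j' =>
      let (n, i) := block_index k j' in
      if Nat.ltb (S i) (k n) then (n, S i) else (S n, 0%nat)
  end.

Section BlockIndex.
Variable k : nat -> nat.

Lemma block_index_lt : (forall n, (1 <= k n)%nat) ->
  forall j, (snd (block_index k j) < k (fst (block_index k j)))%nat.
Proof.
  intros Hk j. induction j as [|j IH]; simpl; [apply Hk|].
  destruct (block_index k j) as [n i]. simpl in *.
  destruct (Nat.ltb_spec (S i) (k n)); simpl; auto.
Qed.

Lemma block_index_S j n i : block_index k j = (n, i) ->
  (block_index k (S j) = (n, S i) /\ (S i < k n)%nat) \/
  (block_index k (S j) = (S n, 0%nat) /\ (k n <= S i)%nat).
Proof.
  intros H. simpl. rewrite H. destruct (Nat.ltb_spec (S i) (k n)); auto.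
Qed.

Lemma block_index_mono j m : (fst (block_index k j) <= fst (block_index k (m + j)))%nat.
Proof.
  induction m as [|m IH]; simpl; [lia|].
  destruct (block_index k (m + j)) as [n i]. simpl in *.
  destruct (Nat.ltb (S i) (k n)); simpl; lia.
Qed.

Lemma block_index_le j : (fst (block_index k j) <= j)%nat.
Proof.
  induction j as [|j IH]; simpl; [lia|].
  destruct (block_index k j) as [n i]. simpl in *.
  destruct (Nat.ltb (S i) (k n)); simpl; lia.
Qed.

Lemma block_index_within j n : block_index k j = (n, 0%nat) ->
  forall i, (i < k n)%nat -> block_index k (i + j) = (n, i).
Proof.
  intros H i. induction i as [|i IH]; intros Hi; simpl; [exact H|].
  rewrite IH by lia. destruct (Nat.ltb_spec (S i) (k n)); [reflexivity | lia].
Qed.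

Lemma block_index_start : (forall n, (1 <= k n)%nat) ->
  forall n, exists j, block_index k j = (n, 0%nat).
Proof.
  intros Hk n. induction n as [|n [j Hj]]; [exists 0%nat; reflexivity|].
  exists (S ((k n - 1) + j)). simpl.
  rewrite (block_index_within j n Hj) by (specialize (Hk n); lia).
  destruct (Nat.ltb_spec (S (k n - 1)) (k n)); [lia | reflexivity].
Qed.

End BlockIndex.

Section Chains.
Variables (X : MetricSpace) (f : X -> X) (A : X -> Prop).

Definition is_chain (sg : R) (k : nat) (c : nat -> X) (a b : X) : Prop :=
  c 0%nat = a /\ c k = b /\ (forall i, (i <= k)%nat -> A (c i)) /\
  (forall i, (i < k)%nat -> dist X (f (c i)) (c (S i)) <= sg).

Definition chain (sg : R) (a b : X) : Prop := exists k c, is_chain sg k c a b.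

Lemma is_chain_splice sg k1 k2 c1 c2 a b d :
  is_chain sg k1 c1 a b -> is_chain sg k2 c2 b d ->
  is_chain sg (k1 + k2) (splice k1 c1 c2) a d.
Proof.
  intros [H0 [H1 [H2 H3]]] [G0 [G1 [G2 G3]]]. unfold splice. repeat split.
  - exact H0.
  - destruct (Nat.leb_spec (k1 + k2) k1).
    + replace k2 with 0%nat in * by lia. rewrite Nat.add_0_r, H1, <- G1. symmetry. exact G0.
    + replace (k1 + k2 - k1)%nat with k2 by lia. exact G1.
  - intros i Hi. destruct (Nat.leb_spec i k1); [apply H2 | apply G2]; lia.
  - intros i Hi. destruct (Nat.leb_spec i k1), (Nat.leb_spec (S i) k1); try lia.
    + apply H3. lia.
    + replace i with k1 by lia. rewrite H1, <- G0.
      replace (S k1 - k1)%nat with 1%nat by lia. apply G3. lia.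
    + replace (S i - k1)%nat with (S (i - k1)) by lia. apply G3. lia.
Qed.

Lemma chain_trans sg a b d : chain sg a b -> chain sg b d -> chain sg a d.
Proof.
  intros [k1 [c1 H1]] [k2 [c2 H2]].
  exists (k1 + k2)%nat, (splice k1 c1 c2). eapply is_chain_splice; eassumption.
Qed.

Lemma chain_refl sg a : A a -> chain sg a a.
Proof.
  intros Ha. exists 0%nat, (fun _ => a). repeat split; auto. intros i Hi. lia.
Qed.

Lemma chain_mono sg sg' a b : sg <= sg' -> chain sg a b -> chain sg' a b.
Proof.
  intros Hs [k [c [H0 [H1 [H2 H3]]]]]. exists k, c. repeat split; auto.
  intros i Hi. eapply Rle_trans; [apply H3, Hi | exact Hs].
Qed.

Lemma is_chain_extend_segment sg xs N b :
  pseudo_orbit X f sg xs -> contained_in X A xs -> chain sg (xs (S N)) b ->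
  exists k c, is_chain sg k c (xs 0%nat) b /\ (N < k)%nat /\
    forall i, (i <= N)%nat -> c i = xs i.
Proof.
  intros Hpo HA [k [c Hc]].
  assert (Hseg : is_chain sg (S N) xs (xs 0%nat) (xs (S N))).
  { repeat split; auto. }
  exists (S N + k)%nat, (splice (S N) xs c). split; [eapply is_chain_splice; eassumption|].
  split; [lia|]. intros i Hi. unfold splice.
  destruct (Nat.leb_spec i (S N)); [reflexivity | lia].
Qed.

Section Gluing.
Variables (k : nat -> nat) (c : nat -> nat -> X) (s : nat -> R).
Hypothesis k_pos : forall n, (1 <= k n)%nat.
Hypothesis c_chain : forall n, is_chain (s n) (k n) (c n) (c n 0%nat) (c (S n) 0%nat).

Definition glue (j : nat) : X := c (fst (block_index k j)) (snd (block_index k j)).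

Lemma glue_in j : A (glue j).
Proof.
  pose proof (block_index_lt k k_pos j) as Hlt. unfold glue.
  destruct (block_index k j) as [n i]. simpl in *.
  destruct (c_chain n) as [_ [_ [HA _]]]. apply HA. lia.
Qed.

Lemma glue_step j : dist X (f (glue j)) (glue (S j)) <= s (fst (block_index k j)).
Proof.
  pose proof (block_index_lt k k_pos j) as Hlt. unfold glue.
  destruct (block_index k j) as [n i] eqn:E. simpl in Hlt.
  destruct (c_chain n) as [_ [Hend [_ Hstep]]].
  destruct (block_index_S k j n i E) as [[E' _] | [E' Hi]]; rewrite E'; simpl.
  - apply Hstep. exact Hlt.
  - rewrite <- Hend.
    replace (k n) with (S i) by lia. apply Hstep. exact Hlt.
Qed.

Lemma glue_limit_pseudo_orbit : Un_cv s 0 -> limit_pseudo_orbit X f glue.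
Proof.
  intros Hs e He. destruct (Hs e He) as [M HM].
  destruct (block_index_start k k_pos M) as [jM HjM].
  exists jM. intros j Hj. unfold R_dist in *. rewrite Rminus_0_r.
  rewrite Rabs_pos_eq by apply dist_nonneg.
  pose proof (block_index_mono k jM (j - jM)) as Hmono.
  replace (j - jM + jM)%nat with j in Hmono by lia. rewrite HjM in Hmono. simpl in Hmono.
  pose proof (HM _ Hmono) as Hsn. rewrite Rminus_0_r in Hsn. pose proof (Rle_abs (s (fst (block_index k j)))).
  pose proof (glue_step j). lra.
Qed.

Lemma glue_block j n i :
  block_index k j = (n, 0%nat) -> (i < k n)%nat -> glue (i + j) = c n i.
Proof.
  intros Hj Hi. unfold glue. rewrite (block_index_within k j n Hj i Hi). reflexivity.
Qed.

End Gluing.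

Hypothesis X_compact : compact_space X.
Hypothesis f_continuous : continuous_map X f.
Hypothesis A_chain_recurrent : forall x, A x -> chain_recurrent_restr X f A x.

Lemma chain_to_near sg a q : A a -> A q -> 0 < sg -> dist X a q <= sg / 2 -> chain sg a q.
Proof.
  intros Ha Hq Hsg Hd. destruct (A_chain_recurrent a Ha) as [_ Hloop].
  destruct (Hloop (sg / 2)) as [k [c [Hk [H0 [H1 [H2 H3]]]]]]; [lra|].
  exists k, (fun i => if Nat.eqb i k then q else c i). repeat split.
  - destruct (Nat.eqb_spec 0 k); [lia | exact H0].
  - rewrite Nat.eqb_refl. reflexivity.
  - intros i Hi. destruct (Nat.eqb_spec i k); auto.
  - intros i Hi. pose proof (H3 i Hi).
    destruct (Nat.eqb_spec i k); [lia|]. destruct (Nat.eqb_spec (S i) k); [|lra].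
    rewrite e, H1 in *. pose proof (dist_tri X (f (c i)) a q). lra.
Qed.

(* A loop at x of mesh eta, run twice so that it has at least two steps, with its first point
   replaced by y: then f y is close to f (c 1) because y and c 1 are both close to f x. *)
Lemma chain_back sg : 0 < sg -> exists eta, 0 < eta /\
  forall x y, A x -> A y -> dist X (f x) y <= eta -> chain sg y x.
Proof.
  intros Hsg.
  destruct (compact_uniform_continuity X f X_compact f_continuous (sg / 2)) as [d [Hd Hu]]; [lra|].
  exists (Rmin (sg / 2) (d / 3)). split; [apply Rmin_glb_lt; lra|].
  intros x y Hx Hy Hxy.
  pose proof (Rmin_l (sg / 2) (d / 3)) as Heta_sg. pose proof (Rmin_r (sg / 2) (d / 3)) as Heta_d.
  set (eta := Rmin (sg / 2) (d / 3)) in *.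
  destruct (A_chain_recurrent x Hx) as [_ Hloop].
  destruct (Hloop eta) as [k0 [c0 [Hk0 Hc0]]]; [apply Rmin_glb_lt; lra|].
  destruct (is_chain_splice _ _ _ _ _ _ _ _ Hc0 Hc0) as [H0 [H1 [H2 H3]]].
  set (c := splice k0 c0 c0) in *. set (k := (k0 + k0)%nat) in *.
  exists (k - 1)%nat, (fun i => if Nat.eqb i 0 then y else c (S i)). repeat split.
  - destruct (Nat.eqb_spec (k - 1) 0); [unfold k in *; lia|].
    replace (S (k - 1)) with k by (unfold k; lia). exact H1.
  - intros i Hi. destruct (Nat.eqb_spec i 0); [exact Hy | apply H2; lia].
  - intros i Hi. destruct (Nat.eqb_spec i 0), (Nat.eqb_spec (S i) 0); try lia.
    + subst i. pose proof (H3 0%nat ltac:(unfold k; lia)) as G0.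
      pose proof (H3 1%nat ltac:(unfold k; lia)) as G1. rewrite H0 in G0.
      pose proof (dist_tri X y (f x) (c 1%nat)). rewrite (dist_sym X y (f x)) in *.
      pose proof (Hu y (c 1%nat) ltac:(lra)).
      pose proof (dist_tri X (f y) (f (c 1%nat)) (c 2%nat)). lra.
    + pose proof (H3 (S i) ltac:(lia)). lra.
Qed.

Lemma chain_pseudo_orbit_back sg : 0 < sg -> exists eta, 0 < eta /\
  forall xs, contained_in X A xs -> pseudo_orbit X f eta xs ->
    forall N, chain sg (xs N) (xs 0%nat).
Proof.
  intros Hsg. destruct (chain_back sg Hsg) as [eta [Heta Hback]].
  exists eta. split; [exact Heta|]. intros xs HA Hpo N.
  induction N as [|N IH]; [apply chain_refl, HA|].
  eapply chain_trans; [apply Hback; auto | exact IH].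
Qed.

Lemma unshadowed_segment_with_return eps sg :
  shadowing_fails_at X f A eps ->
  0 < sg -> exists xs N, contained_in X A xs /\ pseudo_orbit X f sg xs /\
    (forall x, exists i, (i <= N)%nat /\ eps < dist X (xs i) (Nat.iter i f x)) /\
    chain sg (xs (S N)) (xs 0%nat).
Proof.
  intros Hbad Hsg. destruct (chain_pseudo_orbit_back sg Hsg) as [eta [Heta Hback]].
  destruct (Hbad (Rmin eta sg)) as [xs [Hpo [HA Hun]]]; [apply Rmin_glb_lt; assumption|].
  destruct (unshadowed_initial_segment X f xs eps X_compact f_continuous Hun) as [N HN].
  exists xs, N. repeat split; try assumption.
  - intros i. eapply Rle_trans; [apply Hpo | apply Rmin_r].
  - apply Hback; [exact HA|]. intros i. eapply Rle_trans; [apply Hpo | apply Rmin_l].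
Qed.

Lemma chain_block sg xs N p b :
  0 < sg -> contained_in X A xs -> pseudo_orbit X f sg xs -> chain sg (xs (S N)) (xs 0%nat) ->
  A p -> A b -> dist X (xs 0%nat) p <= sg / 2 -> dist X p b <= sg / 2 ->
  exists k c, is_chain sg k c (xs 0%nat) b /\ (N < k)%nat /\
    forall i, (i <= N)%nat -> c i = xs i.
Proof.
  intros Hsg HA Hpo Hret Hp Hb Hxp Hpb. apply is_chain_extend_segment; [assumption..|].
  apply chain_trans with (xs 0%nat); [exact Hret|].
  apply chain_trans with p; apply chain_to_near; auto.
Qed.

Hypothesis A_compact : compact_set X A.

Lemma limit_pseudo_orbit_with_unshadowed_windows eps :
  shadowing_fails_at X f A eps ->
  exists z, limit_pseudo_orbit X f z /\ contained_in X A z /\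
    forall J, exists j N, (J <= j)%nat /\
      forall x, exists i, (i <= N)%nat /\ eps < dist X (z (i + j)%nat) (Nat.iter i f x).
Proof.
  intros Hbad.
  destruct (functional_choice2 _ (fun n =>
    unshadowed_segment_with_return eps (mesh n) Hbad (mesh_pos n))) as [seg [N Hseg]].
  destruct (compact_cluster_point X A (fun n => seg n 0%nat) A_compact) as [p [Hp Hcluster]].
  { intros n. apply (Hseg n). }
  destruct (functional_choice
    (fun n m => (n <= m)%nat /\ dist X p (seg m 0%nat) < mesh n / 2)) as [m Hm].
  { intros n. apply (Hcluster (mesh n / 2) ltac:(pose proof (mesh_pos n); lra) n). }
  destruct (functional_choice2 (fun n k c =>
    is_chain (mesh n) k c (seg (m n) 0%nat) (seg (m (S n)) 0%nat) /\
    (N (m n) < k)%nat /\ forall i, (i <= N (m n))%nat -> c i = seg (m n) i)) as [k [c Hkc]].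
  { intros n. destruct (Hseg (m n)) as [HAn [Hpo [_ Hret]]].
    destruct (Hm n) as [Hmn Hpn], (Hm (S n)) as [_ Hpn1].
    pose proof (mesh_anti _ _ Hmn) as Hmesh_m.
    pose proof (mesh_anti n (S n) (Nat.le_succ_diag_r n)).
    apply chain_block with (p := p).
    - apply mesh_pos.
    - exact HAn.
    - intros i. exact (Rle_trans _ _ _ (Hpo i) Hmesh_m).
    - exact (chain_mono _ _ _ _ Hmesh_m Hret).
    - exact Hp.
    - apply (Hseg (m (S n))).
    - rewrite dist_sym. lra.
    - lra. }
  assert (Hk : forall n, (1 <= k n)%nat) by (intros n; destruct (Hkc n) as [_ [Hlt _]]; lia).
  assert (Hchain : forall n, is_chain (mesh n) (k n) (c n) (c n 0%nat) (c (S n) 0%nat)).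
  { intros n. destruct (Hkc n) as [Hc [_ Hpre]], (Hkc (S n)) as [_ [_ Hpre1]].
    rewrite Hpre, Hpre1 by lia. exact Hc. }
  exists (glue k c). split; [exact (glue_limit_pseudo_orbit k c mesh Hk Hchain mesh_cv0)|].
  split; [exact (glue_in k c mesh Hk Hchain)|].
  intros J. destruct (block_index_start k Hk J) as [j Hj].
  pose proof (block_index_le k j) as HJj. rewrite Hj in HJj.
  destruct (Hseg (m J)) as [_ [_ [Hun _]]], (Hkc J) as [_ [HNk Hpre]].
  exists j, (N (m J)). split; [exact HJj|]. intros x.
  destruct (Hun x) as [i [Hi Hfar]]. exists i. split; [exact Hi|].
  rewrite (glue_block k c j J i Hj), Hpre by lia. exact Hfar.
Qed.

End Chains.

Theorem lemma2p1 (X : MetricSpace) (f : X -> X) (A : X -> Prop) :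
  compact_space X ->
  continuous_map X f ->
  compact_set X A ->
  (forall x, A x -> A (f x)) ->
  (forall x, chain_recurrent_restr X f A x <-> A x) ->
  limit_shadowing_around X f A ->
  shadowing_around X f A.
Proof.
  intros HX Hf HA _ Hcr Hls. apply NNPP; intros Hns.
  destruct (not_shadowing_around X f A Hns) as [eps [Heps Hbad]].
  destruct (limit_pseudo_orbit_with_unshadowed_windows X f A HX Hf
    (fun x => proj2 (Hcr x)) HA eps Hbad) as [z [Hz [HzA Hwindows]]].
  destruct (Hls z Hz HzA) as [y Hy].
  destruct (Hy eps Heps) as [J HJ].
  destruct (Hwindows J) as [j [N [HJj Hun]]].
  destruct (Hun (Nat.iter j f y)) as [i [_ Hfar]].
  pose proof (HJ (i + j)%nat ltac:(lia)) as Hnear. unfold R_dist in Hnear.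
  rewrite Rminus_0_r, Rabs_pos_eq, Nat.iter_add in Hnear by apply dist_nonneg.
  lra.
Qed.
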